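(* Let $\mathcal{G}=\langle\mathcal{Q},\mathbf{f}\rangle$ be a real NEP satisfying Assumptions 1 and 2, and let $\alpha_i^{\min},\beta_{ij}^{\max}$ be computed with $\mathbf{C}_i=\mathbf{I}$ for all $i$. Set $\bar\tau=\max_{1\le i\le I}\{\sum_{j\ne i}\beta_{ij}^{\max}-\alpha_i^{\min}\}$. Then for every $\mathbf{y}\in\mathbb{R}^n$ and every $\tau>\bar\tau$, the game $\mathcal{G}_{\tau,\mathbf{y}}$, in which player $i$ minimizes $f_i(\mathbf{x}_i,\mathbf{x}_{-i})+\frac{\tau}{2}\|\mathbf{x}_i-\mathbf{y}_i\|^2$ over $\mathbf{x}_i\in\mathcal{Q}_i$, is a P$_{\boldsymbol{\Upsilon}}$ NEP.
   Context: Real NEP: player $i$ chooses $\mathbf{x}_i\in\mathcal{Q}_i\subseteq\mathbb{R}^{n_i}$, $n=\sum_in_i$, $\mathcal{Q}=\prod_i\mathcal{Q}_i$, $\mathbf{y}=(\mathbf{y}_i)_i$ with $\mathbf{y}_i\in\mathbb{R}^{n_i}$. Assumption 1: each $\mathcal{Q}_i$ nonempty closed convex; each $f_i$ continuously differentiable on $\mathcal{Q}$ and convex in $\mathbf{x}_i$ for fixed $\mathbf{x}_{-i}$. Assumption 2: each $f_i$ twice continuously differentiable with bounded derivatives on $\mathcal{Q}$. $\mathbf{F}_i=\nabla_{\mathbf{x}_i}f_i$; $\alpha_i^{\min}=\inf_{\mathbf{x}\in\mathcal{Q}}\lambda_{\rm least}(\mathbf{C}_i^T\mathbf{J}_i\mathbf{F}_i(\mathbf{x})\mathbf{C}_i)$,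 $\beta_{ij}^{\max}=\sup_{\mathbf{x}\in\mathcal{Q}}\|\mathbf{C}_i^T\mathbf{J}_j\mathbf{F}_i(\mathbf{x})\mathbf{C}_j\|_2$, where $\mathbf{J}_j\mathbf{F}_i$ is the Jacobian w.r.t. $\mathbf{x}_j$ and $\lambda_{\rm least}(\mathbf{A})$ the smallest eigenvalue of $(\mathbf{A}+\mathbf{A}^T)/2$. $\boldsymbol{\Upsilon}$ of a game is the $I\times I$ matrix with diagonal $\alpha_i^{\min}$, off-diagonal $-\beta_{ij}^{\max}$ computed from that game's gradient map. A game is a P$_{\boldsymbol{\Upsilon}}$ NEP if it satisfies Assumptions 1 and 2 and its $\boldsymbol{\Upsilon}$ is a P-matrix (all principal minors positive). *)

From Stdlib Require Import Reals Lra List.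
Open Scope R_scope.

(** A vector of R^m is
  represented as [vec := nat -> R], only coordinates k < m being meaningful;
  a strategy profile is [prof := nat -> nat -> R], [x i k] being coordinate k
  of x_i.  All metric notions below only read meaningful coordinates, so the
  topology is the Euclidean one on R^n, n = sum_i d i. *)

Definition vec := nat -> R.
Definition prof := nat -> nat -> R.
Definition mat := nat -> nat -> R.

Fixpoint sumR (n : nat) (g : nat -> R) : R :=
  match n with O => 0 | S m => sumR m g + g m end.

Definition vnorm2 (m : nat) (v : vec) : R := sumR m (fun k => (v k) ^ 2).
Definition vnorm (m : nat) (v : vec) : R := sqrt (vnorm2 m v).
Definition vdist (m : nat) (v w : vec) : R := vnorm m (fun k => v k - w k).

Definition pnorm2 (I : nat) (d : nat -> nat) (x : prof) : R :=
  sumR I (fun i => vnorm2 (d i) (x i)).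
Definition pdist (I : nat) (d : nat -> nat) (x y : prof) : R :=
  sqrt (pnorm2 I d (fun i k => x i k - y i k)).

Definition open_set (I : nat) (d : nat -> nat) (U : prof -> Prop) : Prop :=
  forall x, U x -> exists e, 0 < e /\ forall y, pdist I d x y < e -> U y.

Definition closed_vset (m : nat) (S : vec -> Prop) : Prop :=
  forall v, ~ S v -> exists e, 0 < e /\ forall w, vdist m v w < e -> ~ S w.

Definition convex_vset (S : vec -> Prop) : Prop :=
  forall v w t, S v -> S w -> 0 <= t <= 1 ->
    S (fun k => t * v k + (1 - t) * w k).

Definition cont_on (I : nat) (d : nat -> nat) (g : prof -> R)
    (U : prof -> Prop) : Prop :=
  forall x, U x -> forall e, 0 < e -> exists del, 0 < del /\
    forall y, U y -> pdist I d x y < del -> Rabs (g y - g x) < e.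

Definition upd (x : prof) (i k : nat) (h : R) : prof :=
  fun j l => if andb (Nat.eqb j i) (Nat.eqb l k) then x j l + h else x j l.

Definition has_partial (g : prof -> R) (x : prof) (i k : nat) (L : R) : Prop :=
  derivable_pt_lim (fun h => g (upd x i k h)) 0 L.

Definition C1_on (I : nat) (d : nat -> nat) (U : prof -> Prop)
    (g : prof -> R) (Dg : nat -> nat -> prof -> R) : Prop :=
  cont_on I d g U /\
  (forall i k, (i < I)%nat -> (k < d i)%nat ->
     (forall x, U x -> has_partial g x i k (Dg i k x)) /\
     cont_on I d (Dg i k) U).

(** g is C^2 on U, with first partials Dg i k and second partials
    D2g i k j l = d/dx_{j,l} (d g / dx_{i,k}) *)
Definition C2_on (I : nat) (d : nat -> nat) (U : prof -> Prop)
    (g : prof -> R) (Dg : nat -> nat -> prof -> R)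
    (D2g : nat -> nat -> nat -> nat -> prof -> R) : Prop :=
  C1_on I d U g Dg /\
  (forall i k, (i < I)%nat -> (k < d i)%nat -> C1_on I d U (Dg i k) (D2g i k)).

Definition inQ (I : nat) (Q : nat -> vec -> Prop) (x : prof) : Prop :=
  forall i, (i < I)%nat -> Q i (x i).

Definition setblock (x : prof) (i : nat) (v : vec) : prof :=
  fun j => if Nat.eqb j i then v else x j.

Definition Assumption1 (I : nat) (d : nat -> nat) (Q : nat -> vec -> Prop)
    (f : nat -> prof -> R) : Prop :=
  (forall i, (i < I)%nat ->
     (exists v, Q i v) /\ closed_vset (d i) (Q i) /\ convex_vset (Q i)) /\
  (exists (U : prof -> Prop) (D : nat -> nat -> nat -> prof -> R),
     open_set I d U /\ (forall x, inQ I Q x -> U x) /\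
     forall p, (p < I)%nat -> C1_on I d U (f p) (D p)) /\
  (forall i, (i < I)%nat -> forall x, inQ I Q x -> forall v w t,
     Q i v -> Q i w -> 0 <= t <= 1 ->
     f i (setblock x i (fun k => t * v k + (1 - t) * w k))
       <= t * f i (setblock x i v) + (1 - t) * f i (setblock x i w)).

(** second-order data of the game on an open neighbourhood U of Q;
    D2 p i k j l x = d^2 f_p / dx_{j,l} dx_{i,k} (x) *)
Definition Hess_data (I : nat) (d : nat -> nat) (Q : nat -> vec -> Prop)
    (f : nat -> prof -> R) (U : prof -> Prop)
    (D : nat -> nat -> nat -> prof -> R)
    (D2 : nat -> nat -> nat -> nat -> nat -> prof -> R) : Prop :=
  open_set I d U /\ (forall x, inQ I Q x -> U x) /\
  forall p, (p < I)%nat -> C2_on I d U (f p) (D p) (D2 p).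

Definition Assumption2 (I : nat) (d : nat -> nat) (Q : nat -> vec -> Prop)
    (f : nat -> prof -> R) : Prop :=
  exists U D D2, Hess_data I d Q f U D D2 /\
    exists M, forall x, inQ I Q x -> forall p i k j l,
      (p < I)%nat -> (i < I)%nat -> (k < d i)%nat -> (j < I)%nat ->
      (l < d j)%nat -> Rabs (D2 p i k j l x) <= M.

Definition mat_vec (m : nat) (A : mat) (v : vec) : vec :=
  fun k => sumR m (fun l => A k l * v l).

Definition sym_part (A : mat) : mat := fun k l => (A k l + A l k) / 2.

Definition is_eigenvalue (m : nat) (S : mat) (lam : R) : Prop :=
  exists v : vec, (exists k, (k < m)%nat /\ v k <> 0) /\
    forall k, (k < m)%nat -> mat_vec m S v k = lam * v k.

Definition lambda_least (m : nat) (A : mat) (lam : R) : Prop :=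
  is_eigenvalue m (sym_part A) lam /\
  forall mu, is_eigenvalue m (sym_part A) mu -> lam <= mu.

Definition norm2_mat (p q : nat) (A : mat) (s : R) : Prop :=
  is_lub (fun r => exists v : vec, vnorm q v = 1 /\ r = vnorm p (mat_vec q A v)) s.

Definition is_glb (E : R -> Prop) (a : R) : Prop :=
  (forall s, E s -> a <= s) /\ (forall b, (forall s, E s -> b <= s) -> b <= a).

(** alpha_i^min and beta_ij^max with C_i = I; J_j F_i (x) has entries
    (k,l) |-> D2 i i k j l x *)
Definition alpha_min (I : nat) (d : nat -> nat) (Q : nat -> vec -> Prop)
    (f : nat -> prof -> R) (i : nat) (a : R) : Prop :=
  exists U D D2, Hess_data I d Q f U D D2 /\
    is_glb (fun lam => exists x, inQ I Q x /\
              lambda_least (d i) (fun k l => D2 i i k i l x) lam) a.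

Definition beta_max (I : nat) (d : nat -> nat) (Q : nat -> vec -> Prop)
    (f : nat -> prof -> R) (i j : nat) (b : R) : Prop :=
  exists U D D2, Hess_data I d Q f U D D2 /\
    is_lub (fun r => exists x, inQ I Q x /\
              norm2_mat (d i) (d j) (fun k l => D2 i i k j l x) r) b.

Definition minor (A : mat) (j : nat) : mat :=
  fun r c => A (S r) (if Nat.ltb c j then c else S c).

Fixpoint det (m : nat) (A : mat) : R :=
  match m with
  | O => 1
  | S m' => sumR (S m') (fun j => (-1) ^ j * A O j * det m' (minor A j))
  end.

Definition P_matrix (I : nat) (M : mat) : Prop :=
  forall s : list nat, s <> nil ->
    (forall a b, (a < b)%nat -> (b < length s)%nat -> (nth a s O < nth b s O)%nat) ->
    (forall i, In i s -> (i < I)%nat) ->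
    0 < det (length s) (fun r c => M (nth r s O) (nth c s O)).

Definition is_Upsilon (I : nat) (d : nat -> nat) (Q : nat -> vec -> Prop)
    (f : nat -> prof -> R) (M : mat) : Prop :=
  (forall i, (i < I)%nat -> alpha_min I d Q f i (M i i)) /\
  (forall i j, (i < I)%nat -> (j < I)%nat -> i <> j ->
     beta_max I d Q f i j (- M i j)).

Definition PUpsilon_NEP (I : nat) (d : nat -> nat) (Q : nat -> vec -> Prop)
    (f : nat -> prof -> R) : Prop :=
  Assumption1 I d Q f /\ Assumption2 I d Q f /\
  exists M, is_Upsilon I d Q f M /\ P_matrix I M.

Definition reg_game (d : nat -> nat) (f : nat -> prof -> R) (tau : R) (y : prof)
    : nat -> prof -> R :=
  fun i x => f i x + tau / 2 * vnorm2 (d i) (fun k => x i k - y i k).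

(** Let g_i = f_i + tau/2 ||x_i - y_i||^2 be the cost of player i in G_{tau,y}.
  The proximal term only adds the constant tau * Id to the diagonal Hessian
  block J_i F_i and leaves every off-diagonal block J_j F_i (j <> i) alone.
  Consequently alpha_i^min becomes alpha_i + tau, beta_ij^max is unchanged,
  and Upsilon(G_{tau,y}) = Upsilon(G) + tau Id.  Because tau > taubar and the
  beta's are nonnegative, this matrix has a positive, strictly dominant
  diagonal; so has each principal submatrix, and a strictly diagonally
  dominant matrix has positive determinant: Upsilon is a P-matrix.
  Assumption 2 survives since the added second derivatives are constant.
  In Assumption 1 only convexity needs work, tau being possibly negative:
  along a segment inside block i the second derivative of g_i is
  u^T H u + tau |u|^2 >= (alpha_i + tau) |u|^2 >= 0 by the Rayleigh bound
  u^T H u >= lambda_least(H) |u|^2. *)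

From Stdlib Require Import Reals List.
From Stdlib Require Import Lra Lia FunctionalExtensionality Classical.
(* imported after Reals, so that Defs.open_set shadows Rtopology's *)
From Pilot Require Import Defs.
Open Scope R_scope.

(** ** Finite sums *)

Lemma sumR_ext n g h : (forall k, (k < n)%nat -> g k = h k) -> sumR n g = sumR n h.
Proof.
  induction n; simpl; intros H; auto.
  rewrite IHn by (intros; apply H; lia). rewrite H by lia; auto.
Qed.

Lemma sumR_plus n g h : sumR n (fun k => g k + h k) = sumR n g + sumR n h.
Proof. induction n; simpl; [lra | rewrite IHn; lra]. Qed.

Lemma sumR_scal n c g : sumR n (fun k => c * g k) = c * sumR n g.
Proof. induction n; simpl; [ring | rewrite IHn; ring]. Qed.

Lemma sumR_minus n g h : sumR n (fun k => g k - h k) = sumR n g - sumR n h.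
Proof. induction n; simpl; [lra | rewrite IHn; lra]. Qed.

Lemma sumR_le n g h : (forall k, (k < n)%nat -> g k <= h k) -> sumR n g <= sumR n h.
Proof.
  induction n; simpl; intros H; [lra |].
  assert (g n <= h n) by (apply H; lia).
  assert (sumR n g <= sumR n h) by (apply IHn; intros; apply H; lia). lra.
Qed.

Lemma sumR_zero n g : (forall k, (k < n)%nat -> g k = 0) -> sumR n g = 0.
Proof.
  induction n; simpl; intros H; auto.
  rewrite IHn, H by (try intros; try apply H; lia). lra.
Qed.

Lemma sumR_nonneg n g : (forall k, (k < n)%nat -> 0 <= g k) -> 0 <= sumR n g.
Proof.
  intros H. rewrite <- (sumR_zero n (fun _ => 0)) by auto. apply sumR_le; auto.
Qed.

Lemma sumR_const n c : sumR n (fun _ => c) = INR n * c.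
Proof. induction n; simpl sumR; [simpl; ring |]. rewrite IHn, S_INR. ring. Qed.

Lemma sumR_abs n g : Rabs (sumR n g) <= sumR n (fun k => Rabs (g k)).
Proof.
  induction n; simpl; [rewrite Rabs_R0; lra |].
  eapply Rle_trans; [apply Rabs_triang | lra].
Qed.

Lemma sumR_term n g k :
  (forall j, (j < n)%nat -> 0 <= g j) -> (k < n)%nat -> g k <= sumR n g.
Proof.
  induction n; intros H Hk; [lia |]. simpl.
  assert (0 <= g n) by (apply H; lia).
  destruct (Nat.eq_dec k n) as [-> | Hne].
  - assert (0 <= sumR n g) by (apply sumR_nonneg; intros; apply H; lia). lra.
  - assert (g k <= sumR n g) by (apply IHn; [intros; apply H; lia | lia]). lra.
Qed.

Lemma sumR_single n g i :
  (forall k, (k < n)%nat -> k <> i -> g k = 0) -> (i < n)%nat -> sumR n g = g i.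
Proof.
  induction n; intros H Hi; [lia |]. simpl.
  destruct (Nat.eq_dec i n) as [-> | Hne].
  - rewrite sumR_zero; [lra |]. intros; apply H; lia.
  - rewrite IHn; [| intros; apply H; lia | lia]. rewrite (H n) by lia. lra.
Qed.

Lemma sumR_delta_mul n (c : R) (v : nat -> R) k : (k < n)%nat ->
  sumR n (fun l => (if Nat.eqb l k then c else 0) * v l) = c * v k.
Proof.
  intros Hk. rewrite (sumR_single _ _ k); [now rewrite Nat.eqb_refl | | exact Hk].
  intros l _ Hl. apply Nat.eqb_neq in Hl. rewrite Hl; ring.
Qed.

Lemma sumR_mono_n n m g :
  (forall k, (k < m)%nat -> 0 <= g k) -> (n <= m)%nat -> sumR n g <= sumR m g.
Proof.
  intros H Hnm. induction Hnm; [lra |]. simpl.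
  assert (0 <= g m) by (apply H; lia).
  assert (sumR n g <= sumR m g) by (apply IHHnm; intros; apply H; lia). lra.
Qed.

Lemma sumR_telescope n (a : nat -> R) : sumR n (fun m => a (S m) - a m) = a n - a O.
Proof. induction n; simpl; [ring | rewrite IHn; ring]. Qed.

Lemma sumR_sublist_le (s : list nat) N (F : nat -> R) :
  (forall a b, (a < b)%nat -> (b < length s)%nat -> (nth a s O < nth b s O)%nat) ->
  (forall i, In i s -> (i < N)%nat) ->
  (forall j, (j < N)%nat -> 0 <= F j) ->
  sumR (length s) (fun c => F (nth c s O)) <= sumR N F.
Proof.
  intros Hs Hin HF.
  assert (key : forall m b, (m <= length s)%nat -> (b <= N)%nat ->
     (forall c, (c < m)%nat -> (nth c s O < b)%nat) ->
     sumR m (fun c => F (nth c s O)) <= sumR b F).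
  { induction m; intros b Hm Hb Hc.
    - simpl. apply sumR_nonneg. intros; apply HF; lia.
    - simpl. set (p := nth m s O).
      assert (Hpb : (p < b)%nat) by (apply Hc; lia).
      assert (IH : sumR m (fun c => F (nth c s O)) <= sumR p F).
      { apply IHm; [lia | lia |]. intros c Hcm. apply Hs; lia. }
      assert (Hp : sumR (S p) F <= sumR b F).
      { apply sumR_mono_n; [intros; apply HF; lia | lia]. }
      simpl in Hp. lra. }
  apply key; [lia | lia |]. intros c Hc. apply Hin, nth_In, Hc.
Qed.

(** ** Distances and continuity on profiles *)

Lemma vnorm2_nonneg m v : 0 <= vnorm2 m v.
Proof. apply sumR_nonneg. intros; apply pow2_ge_0. Qed.

Lemma pdist_nonneg I d x y : 0 <= pdist I d x y.
Proof. apply sqrt_pos. Qed.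

Lemma pdist_sym I d x y : pdist I d x y = pdist I d y x.
Proof.
  unfold pdist, pnorm2, vnorm2. f_equal.
  apply sumR_ext; intros. apply sumR_ext; intros. ring.
Qed.

Lemma coord_le_pdist I d x y i k : (i < I)%nat -> (k < d i)%nat ->
  Rabs (x i k - y i k) <= pdist I d x y.
Proof.
  intros Hi Hk. unfold pdist. rewrite <- sqrt_Rsqr_abs. apply sqrt_le_1_alt.
  eapply Rle_trans;
    [| apply (sumR_term _ _ i); [intros; apply vnorm2_nonneg | exact Hi]].
  eapply Rle_trans;
    [| apply (sumR_term _ (fun l => (x i l - y i l) ^ 2) k);
       [intros; apply pow2_ge_0 | exact Hk]].
  unfold Rsqr. simpl. lra.
Qed.

Lemma pdist_setblock I d x i B1 B2 c : (i < I)%nat -> 0 <= c ->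
  (forall k, (k < d i)%nat -> Rabs (B2 k - B1 k) <= c) ->
  pdist I d (setblock x i B1) (setblock x i B2) <= (INR (d i) + 1) * c.
Proof.
  intros Hi Hc Hb. unfold pdist.
  assert (E : pnorm2 I d (fun j k => setblock x i B1 j k - setblock x i B2 j k)
              = vnorm2 (d i) (fun k => B1 k - B2 k)).
  { unfold pnorm2. rewrite (sumR_single _ _ i); [| | exact Hi].
    - unfold setblock. rewrite Nat.eqb_refl. reflexivity.
    - intros j _ Hj. unfold setblock. apply Nat.eqb_neq in Hj. rewrite Hj.
      apply sumR_zero. intros; ring. }
  rewrite E.
  assert (Hle : vnorm2 (d i) (fun k => B1 k - B2 k) <= INR (d i) * c ^ 2).
  { unfold vnorm2. rewrite <- sumR_const. apply sumR_le. intros k Hk.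
    specialize (Hb k Hk). rewrite Rabs_minus_sym in Hb.
    rewrite <- pow2_abs. assert (0 <= Rabs (B1 k - B2 k)) by apply Rabs_pos. nra. }
  assert (Hd : 0 <= INR (d i)) by apply pos_INR.
  rewrite <- (sqrt_pow2 ((INR (d i) + 1) * c)) by nra.
  apply sqrt_le_1_alt. nra.
Qed.

Lemma cont_on_eq I d g U x y :
  cont_on I d g U -> U x -> U y -> pdist I d x y = 0 -> g x = g y.
Proof.
  intros Hc Ux Uy H0. destruct (Req_dec (g y) (g x)) as [E | E]; [auto |].
  exfalso. assert (Hp : 0 < Rabs (g y - g x)) by (apply Rabs_pos_lt; lra).
  destruct (Hc x Ux _ Hp) as [del [Hd Hy]].
  specialize (Hy y Uy). rewrite H0 in Hy. specialize (Hy Hd). lra.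
Qed.

Lemma cont_on_plus I d g h U :
  cont_on I d g U -> cont_on I d h U -> cont_on I d (fun x => g x + h x) U.
Proof.
  intros Hg Hh x Ux e He.
  destruct (Hg x Ux (e / 2)) as [d1 [Hd1 H1]]; [lra |].
  destruct (Hh x Ux (e / 2)) as [d2 [Hd2 H2]]; [lra |].
  exists (Rmin d1 d2); split; [apply Rmin_pos; auto |]. intros y Uy Hy.
  assert (A1 := H1 y Uy (Rlt_le_trans _ _ _ Hy (Rmin_l _ _))).
  assert (A2 := H2 y Uy (Rlt_le_trans _ _ _ Hy (Rmin_r _ _))).
  replace (g y + h y - (g x + h x)) with ((g y - g x) + (h y - h x)) by ring.
  eapply Rle_lt_trans; [apply Rabs_triang | lra].
Qed.

Definition cont_everywhere I d (g : prof -> R) : Prop :=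
  forall x e, 0 < e -> exists del, 0 < del /\
    forall y, pdist I d x y < del -> Rabs (g y - g x) < e.

Lemma cont_everywhere_on I d g U : cont_everywhere I d g -> cont_on I d g U.
Proof.
  intros H x _ e He. destruct (H x e He) as [del [Hd Hy]].
  exists del; split; auto.
Qed.

Lemma cont_everywhere_const I d c : cont_everywhere I d (fun _ => c).
Proof.
  intros x e He. exists 1; split; [lra |]. intros.
  replace (c - c) with 0 by ring. rewrite Rabs_R0; lra.
Qed.

Lemma cont_everywhere_coord I d i k : (i < I)%nat -> (k < d i)%nat ->
  cont_everywhere I d (fun x => x i k).
Proof.
  intros Hi Hk x e He. exists e; split; auto. intros y Hy.
  eapply Rle_lt_trans; [| exact Hy]. rewrite pdist_sym. apply coord_le_pdist; auto.
Qed.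

Lemma cont_everywhere_ext I d g h :
  (forall x, g x = h x) -> cont_everywhere I d g -> cont_everywhere I d h.
Proof.
  intros E H x e He. destruct (H x e He) as [del [Hd Hy]].
  exists del; split; auto. intros y Hxy. rewrite <- !E. auto.
Qed.

Lemma cont_everywhere_plus I d g h : cont_everywhere I d g -> cont_everywhere I d h ->
  cont_everywhere I d (fun x => g x + h x).
Proof.
  intros Hg Hh x e He.
  destruct (Hg x (e / 2)) as [d1 [Hd1 H1]]; [lra |].
  destruct (Hh x (e / 2)) as [d2 [Hd2 H2]]; [lra |].
  exists (Rmin d1 d2); split; [apply Rmin_pos; auto |]. intros y Hy.
  assert (A1 := H1 y (Rlt_le_trans _ _ _ Hy (Rmin_l _ _))).
  assert (A2 := H2 y (Rlt_le_trans _ _ _ Hy (Rmin_r _ _))).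
  replace (g y + h y - (g x + h x)) with ((g y - g x) + (h y - h x)) by ring.
  eapply Rle_lt_trans; [apply Rabs_triang | lra].
Qed.

Lemma cont_everywhere_mult I d g h : cont_everywhere I d g -> cont_everywhere I d h ->
  cont_everywhere I d (fun x => g x * h x).
Proof.
  intros Hg Hh x e He.
  set (a := g x). set (b := h x).
  assert (Ha := Rabs_pos a). assert (Hb := Rabs_pos b).
  destruct (Hg x (e / (2 * (Rabs b + 1)))) as [d1 [Hd1 H1]].
  { apply Rdiv_lt_0_compat; lra. }
  destruct (Hh x (Rmin 1 (e / (2 * (Rabs a + 1))))) as [d2 [Hd2 H2]].
  { apply Rmin_pos; [lra |]. apply Rdiv_lt_0_compat; lra. }
  exists (Rmin d1 d2); split; [apply Rmin_pos; auto |]. intros y Hy.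
  assert (A1 := H1 y (Rlt_le_trans _ _ _ Hy (Rmin_l _ _))).
  assert (A2 := H2 y (Rlt_le_trans _ _ _ Hy (Rmin_r _ _))).
  fold a b in A1, A2 |- *.
  set (p := g y - a) in *. set (q := h y - b) in *.
  replace (g y * h y - a * b) with (p * b + p * q + a * q) by (unfold p, q; ring).
  assert (Hq1 : Rabs q < 1) by (eapply Rlt_le_trans; [exact A2 | apply Rmin_l]).
  assert (Hq2 : Rabs q < e / (2 * (Rabs a + 1)))
    by (eapply Rlt_le_trans; [exact A2 | apply Rmin_r]).
  assert (Hp' : Rabs p * (2 * (Rabs b + 1)) < e).
  { apply (Rmult_lt_compat_r (2 * (Rabs b + 1))) in A1; [| lra].
    unfold Rdiv in A1. rewrite Rmult_assoc, Rinv_l in A1 by lra. lra. }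
  assert (Hq' : Rabs q * (2 * (Rabs a + 1)) < e).
  { apply (Rmult_lt_compat_r (2 * (Rabs a + 1))) in Hq2; [| lra].
    unfold Rdiv in Hq2. rewrite Rmult_assoc, Rinv_l in Hq2 by lra. lra. }
  assert (Hpp := Rabs_pos p). assert (Hqq := Rabs_pos q).
  eapply Rle_lt_trans.
  { eapply Rle_trans; [apply Rabs_triang |]. apply Rplus_le_compat_r, Rabs_triang. }
  rewrite !Rabs_mult. nra.
Qed.

Lemma cont_everywhere_sum I d n (G : nat -> prof -> R) :
  (forall k, (k < n)%nat -> cont_everywhere I d (G k)) ->
  cont_everywhere I d (fun x => sumR n (fun k => G k x)).
Proof.
  induction n; intros H.
  - exact (cont_everywhere_const I d 0).
  - apply (cont_everywhere_plus I d (fun x => sumR n (fun k => G k x)) (G n)).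
    + apply IHn; intros; apply H; lia.
    + apply H; lia.
Qed.

Lemma common_radius n (Pr : nat -> R -> Prop) :
  (forall m del del', 0 < del' <= del -> Pr m del -> Pr m del') ->
  (forall m, (m < n)%nat -> exists del, 0 < del /\ Pr m del) ->
  exists del, 0 < del /\ forall m, (m < n)%nat -> Pr m del.
Proof.
  intros Hmono. induction n; intros H.
  - exists 1; split; [lra | intros; lia].
  - destruct IHn as [d1 [Hd1 H1]]; [intros; apply H; lia |].
    destruct (H n (Nat.lt_succ_diag_r n)) as [d2 [Hd2 H2]].
    exists (Rmin d1 d2); split; [apply Rmin_pos; auto |]. intros m Hm.
    destruct (Nat.eq_dec m n) as [-> | Hne].
    + apply (Hmono n d2); [split; [apply Rmin_pos; auto | apply Rmin_r] | auto].
    + apply (Hmono m d1); [split; [apply Rmin_pos; auto | apply Rmin_l] | apply H1; lia].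
Qed.

Lemma dlim_ext f g x l :
  (forall h, f h = g h) -> derivable_pt_lim f x l -> derivable_pt_lim g x l.
Proof. intros E H. replace g with f; auto. apply functional_extensionality; auto. Qed.

Lemma dlim_val f x l l' : l = l' -> derivable_pt_lim f x l -> derivable_pt_lim f x l'.
Proof. intros ->; auto. Qed.

Lemma dlim_const c x : derivable_pt_lim (fun _ => c) x 0.
Proof. exact (derivable_pt_lim_const c x). Qed.

Lemma dlim_plus f g x l1 l2 : derivable_pt_lim f x l1 -> derivable_pt_lim g x l2 ->
  derivable_pt_lim (fun h => f h + g h) x (l1 + l2).
Proof. intros; apply (derivable_pt_lim_plus f g); auto. Qed.

Lemma dlim_mul f g x l1 l2 : derivable_pt_lim f x l1 -> derivable_pt_lim g x l2 ->
  derivable_pt_lim (fun h => f h * g h) x (l1 * g x + f x * l2).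
Proof. intros; apply (derivable_pt_lim_mult f g); auto. Qed.

Lemma dlim_mulc f x l c :
  derivable_pt_lim f x l -> derivable_pt_lim (fun h => f h * c) x (l * c).
Proof.
  intros H. eapply dlim_val; [| apply (dlim_mul f (fun _ => c)); [exact H | apply dlim_const]].
  ring.
Qed.

Lemma dlim_cmul c f x l :
  derivable_pt_lim f x l -> derivable_pt_lim (fun h => c * f h) x (c * l).
Proof.
  intros H. eapply dlim_val; [| apply (dlim_mul (fun _ => c) f); [apply dlim_const | exact H]].
  ring.
Qed.

Lemma dlim_affine a x : derivable_pt_lim (fun h => a + h) x 1.
Proof.
  eapply dlim_val;
    [| apply (dlim_plus (fun _ => a) (fun h => h)); [apply dlim_const | apply derivable_pt_lim_id]].
  ring.
Qed.

Lemma dlim_sum n (F : nat -> R -> R) (F' : nat -> R) x :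
  (forall k, (k < n)%nat -> derivable_pt_lim (F k) x (F' k)) ->
  derivable_pt_lim (fun h => sumR n (fun k => F k h)) x (sumR n F').
Proof.
  induction n; intros H.
  - exact (dlim_const 0 x).
  - simpl. apply (dlim_plus (fun h => sumR n (fun k => F k h)) (F n)).
    + apply IHn; intros; apply H; lia.
    + apply H; lia.
Qed.

Lemma dlim_shift f t L :
  derivable_pt_lim (fun h => f (t + h)) 0 L -> derivable_pt_lim f t L.
Proof.
  intros H eps He. destruct (H eps He) as [del Hd]. exists del. intros h Hh0 Hh.
  specialize (Hd h Hh0 Hh). rewrite Rplus_0_l, Rplus_0_r in Hd. exact Hd.
Qed.

Lemma dlim_sq_if (b : bool) a c :
  derivable_pt_lim (fun h => ((if b then a + h else a) - c) ^ 2) 0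
    (if b then 2 * (a - c) else 0).
Proof.
  destruct b; [| apply dlim_const].
  apply (dlim_ext (fun h => (a - c + h) * (a - c + h))); [intros; ring |].
  eapply dlim_val; [| apply dlim_mul; apply dlim_affine]. ring.
Qed.

Lemma dlim_lin_if (b : bool) a c t :
  derivable_pt_lim (fun h => t * ((if b then a + h else a) - c)) 0 (if b then t else 0).
Proof.
  destruct b; [| apply dlim_const].
  apply (dlim_ext (fun h => t * (a - c + h))); [intros; ring |].
  eapply dlim_val; [| apply dlim_cmul; apply dlim_affine]. ring.
Qed.

Lemma mvt_sym (G G' : R -> R) c :
  (forall s, Rabs s <= Rabs c -> derivable_pt_lim G s (G' s)) ->
  exists s, Rabs s <= Rabs c /\ G c - G 0 = G' s * c.
Proof.
  intros H. destruct (Rtotal_order c 0) as [Hc | [Hc | Hc]].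
  - destruct (MVT_cor2 G G' c 0 Hc) as [s [Es Hs]].
    + intros s Hs; apply H. rewrite (Rabs_left c) by lra.
      unfold Rabs; destruct Rcase_abs; lra.
    + exists s; split; [rewrite (Rabs_left c) by lra; unfold Rabs; destruct Rcase_abs |]; lra.
  - subst c. exists 0; split; [lra | ring].
  - destruct (MVT_cor2 G G' 0 c Hc) as [s [Es Hs]].
    + intros s Hs; apply H. rewrite (Rabs_right c) by lra.
      unfold Rabs; destruct Rcase_abs; lra.
    + exists s; split; [rewrite (Rabs_right c) by lra; unfold Rabs; destruct Rcase_abs |]; lra.
Qed.

Lemma convex_from_second (phi psi psi' : R -> R) :
  (forall t, 0 <= t <= 1 -> derivable_pt_lim phi t (psi t)) ->
  (forall t, 0 <= t <= 1 -> derivable_pt_lim psi t (psi' t)) ->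
  (forall t, 0 <= t <= 1 -> 0 <= psi' t) ->
  forall t, 0 <= t <= 1 -> phi t <= t * phi 1 + (1 - t) * phi 0.
Proof.
  intros H1 H2 H3 t Ht.
  destruct (Req_dec t 0) as [-> | Ht0]; [right; ring |].
  destruct (Req_dec t 1) as [-> | Ht1]; [right; ring |].
  destruct (MVT_cor2 phi psi 0 t) as [c1 [E1 Hc1]]; [lra | intros; apply H1; lra |].
  destruct (MVT_cor2 phi psi t 1) as [c2 [E2 Hc2]]; [lra | intros; apply H1; lra |].
  destruct (MVT_cor2 psi psi' c1 c2) as [c3 [E3 Hc3]]; [lra | intros; apply H2; lra |].
  (* the slope psi increases from c1 to c2 *)
  assert (0 <= psi' c3) by (apply H3; lra).
  assert (Hd : 0 <= psi c2 - psi c1) by (rewrite E3; apply Rmult_le_pos; lra).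
  assert (0 <= t * (1 - t) * (psi c2 - psi c1))
    by (apply Rmult_le_pos; [apply Rmult_le_pos |]; lra).
  nra.
Qed.

(** The increment
  over [t, t+h] is split into coordinate moves, each handled by the mean value
  theorem, and the partials are frozen at the base point using their
  continuity. *)

Definition shift_coord (B : vec) (m : nat) (s : R) : vec :=
  fun k => if Nat.eqb k m then B k + s else B k.

Lemma shift_coord0 B m : shift_coord B m 0 = B.
Proof.
  apply functional_extensionality; intro k. unfold shift_coord. destruct (Nat.eqb k m); ring.
Qed.

Lemma upd_setblock x i B m s : upd (setblock x i B) i m s = setblock x i (shift_coord B m s).
Proof.
  apply functional_extensionality; intro j. apply functional_extensionality; intro l.
  unfold upd, setblock, shift_coord. destruct (Nat.eqb j i), (Nat.eqb l m); reflexivity.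
Qed.

Lemma partial_along_line I d U g Dg x i B m s :
  (i < I)%nat -> (m < d i)%nat -> C1_on I d U g Dg ->
  U (setblock x i (shift_coord B m s)) ->
  derivable_pt_lim (fun s' => g (setblock x i (shift_coord B m s'))) s
    (Dg i m (setblock x i (shift_coord B m s))).
Proof.
  intros Hi Hm [_ HC] HU. destruct (HC i m Hi Hm) as [Hp _].
  specialize (Hp _ HU). unfold has_partial in Hp.
  apply dlim_shift. eapply dlim_ext; [| exact Hp]. intros h. cbv beta. rewrite upd_setblock.
  f_equal. f_equal. apply functional_extensionality; intro k. unfold shift_coord.
  destruct (Nat.eqb k m); ring.
Qed.

Lemma coordinate_mvt I d U g Dg x i B m c :
  (i < I)%nat -> (m < d i)%nat -> C1_on I d U g Dg ->
  (forall s, Rabs s <= Rabs c -> U (setblock x i (shift_coord B m s))) ->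
  exists s, Rabs s <= Rabs c /\
    g (setblock x i (shift_coord B m c)) - g (setblock x i B)
      = Dg i m (setblock x i (shift_coord B m s)) * c.
Proof.
  intros Hi Hm HC HU.
  destruct (mvt_sym (fun s => g (setblock x i (shift_coord B m s)))
                    (fun s => Dg i m (setblock x i (shift_coord B m s))) c) as [s [Hs Es]].
  { intros s Hs. apply (partial_along_line I d U); auto. }
  exists s; split; auto. cbv beta in Es. rewrite <- Es, shift_coord0. reflexivity.
Qed.

Definition path_point (b0 u : vec) (h : R) (m : nat) : vec :=
  fun k => if Nat.ltb k m then b0 k + h * u k else b0 k.

Lemma path_point_0 b0 u h : path_point b0 u h 0 = b0.
Proof. apply functional_extensionality; intro k. reflexivity. Qed.

Lemma path_point_step b0 u h m :
  shift_coord (path_point b0 u h m) m (h * u m) = path_point b0 u h (S m).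
Proof.
  apply functional_extensionality; intro k. unfold shift_coord, path_point.
  destruct (Nat.eqb_spec k m) as [-> | Hkm].
  - rewrite Nat.ltb_irrefl, (proj2 (Nat.ltb_lt m (S m))) by lia. ring.
  - destruct (Nat.ltb_spec k m), (Nat.ltb_spec k (S m)); try lia; ring.
Qed.

Section BlockIncrement.
Variables (I : nat) (d : nat -> nat) (U : prof -> Prop) (g : prof -> R)
  (Dg : nat -> nat -> prof -> R) (x : prof) (i : nat) (b0 u : vec) (h r eps : R).
Hypothesis Hi : (i < I)%nat.
Hypothesis HC : C1_on I d U g Dg.
Hypothesis Hball : forall Y, pdist I d (setblock x i b0) Y < r -> U Y.
Hypothesis Hosc : forall m Y, (m < d i)%nat -> U Y -> pdist I d (setblock x i b0) Y < r ->
  Rabs (Dg i m Y - Dg i m (setblock x i b0)) < eps.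
Hypothesis Hsmall :
  (INR (d i) + 1) * (Rabs h * sumR (d i) (fun m => Rabs (u m))) < r.

Let Um := sumR (d i) (fun m => Rabs (u m)).
Let P := setblock x i b0.

Lemma Um_nonneg : 0 <= Um.
Proof. apply sumR_nonneg; intros; apply Rabs_pos. Qed.

Lemma move_small k : (k < d i)%nat -> Rabs (h * u k) <= Rabs h * Um.
Proof.
  intros Hk. rewrite Rabs_mult. apply Rmult_le_compat_l; [apply Rabs_pos |].
  apply (sumR_term (d i) (fun m => Rabs (u m))); [intros; apply Rabs_pos | exact Hk].
Qed.

Lemma near_in_ball B :
  (forall k, (k < d i)%nat -> Rabs (B k - b0 k) <= Rabs h * Um) ->
  U (setblock x i B) /\ pdist I d P (setblock x i B) < r.
Proof.
  intros HB.
  assert (Hd : pdist I d P (setblock x i B) < r).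
  { eapply Rle_lt_trans; [| exact Hsmall].
    apply pdist_setblock; [exact Hi | | exact HB].
    apply Rmult_le_pos; [apply Rabs_pos | exact Um_nonneg]. }
  split; [apply Hball |]; exact Hd.
Qed.

Lemma path_step_bound m : (m < d i)%nat ->
  Rabs (g (setblock x i (path_point b0 u h (S m))) - g (setblock x i (path_point b0 u h m))
        - Dg i m P * (h * u m)) <= eps * (Rabs h * Rabs (u m)).
Proof.
  intros Hm.
  assert (Hon : forall s, Rabs s <= Rabs (h * u m) ->
            U (setblock x i (shift_coord (path_point b0 u h m) m s)) /\
            pdist I d P (setblock x i (shift_coord (path_point b0 u h m) m s)) < r).
  { intros s Hs. apply near_in_ball. intros k Hk. unfold shift_coord, path_point.
    destruct (Nat.eqb_spec k m) as [-> | Hkm].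
    - rewrite Nat.ltb_irrefl. replace (b0 m + s - b0 m) with s by ring.
      eapply Rle_trans; [exact Hs | apply move_small, Hm].
    - destruct (Nat.ltb k m).
      + replace (b0 k + h * u k - b0 k) with (h * u k) by ring. apply move_small, Hk.
      + replace (b0 k - b0 k) with 0 by ring. rewrite Rabs_R0.
        apply Rmult_le_pos; [apply Rabs_pos | exact Um_nonneg]. }
  destruct (coordinate_mvt I d U g Dg x i (path_point b0 u h m) m (h * u m))
    as [s [Hs Es]]; auto.
  { intros s Hs. apply Hon, Hs. }
  rewrite <- (path_point_step b0 u h m), Es, <- Rmult_minus_distr_r.
  destruct (Hon s Hs) as [HUs Hds].
  pose proof (Hosc m _ Hm HUs Hds) as Hclose.
  rewrite Rabs_mult, (Rabs_mult h).
  apply Rmult_le_compat_r; [apply Rmult_le_pos; apply Rabs_pos | unfold P; lra].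
Qed.

Lemma path_bound :
  Rabs (g (setblock x i (path_point b0 u h (d i))) - g P
        - h * sumR (d i) (fun m => Dg i m P * u m)) <= eps * (Rabs h * Um).
Proof.
  unfold P. rewrite <- (path_point_0 b0 u h) at 2.
  rewrite <- (sumR_telescope (d i) (fun m => g (setblock x i (path_point b0 u h m)))).
  rewrite <- sumR_scal, <- sumR_minus.
  eapply Rle_trans; [apply sumR_abs |].
  unfold Um. rewrite <- sumR_scal, <- sumR_scal. apply sumR_le. intros m Hm.
  replace (h * (Dg i m (setblock x i b0) * u m))
    with (Dg i m (setblock x i b0) * (h * u m)) by ring.
  apply path_step_bound, Hm.
Qed.

(** The end of the path agrees with b0 + h u on the meaningful coordinates. *)
Lemma path_end :
  g (setblock x i (fun k => b0 k + h * u k)) = g (setblock x i (path_point b0 u h (d i))).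
Proof.
  assert (Hlt : forall k, (k < d i)%nat -> path_point b0 u h (d i) k = b0 k + h * u k).
  { intros k Hk. unfold path_point. rewrite (proj2 (Nat.ltb_lt k (d i)) Hk). reflexivity. }
  destruct HC as [Hgc _]. apply (cont_on_eq I d g U); [exact Hgc | | |].
  - apply near_in_ball. intros k Hk. replace (b0 k + h * u k - b0 k) with (h * u k) by ring.
    apply move_small, Hk.
  - apply near_in_ball. intros k Hk. rewrite Hlt by exact Hk.
    replace (b0 k + h * u k - b0 k) with (h * u k) by ring. apply move_small, Hk.
  - apply Rle_antisym; [| apply pdist_nonneg].
    replace 0 with ((INR (d i) + 1) * 0) by ring.
    apply pdist_setblock; [exact Hi | lra |]. intros k Hk. rewrite Hlt by exact Hk.
    replace (b0 k + h * u k - (b0 k + h * u k)) with 0 by ring. rewrite Rabs_R0; lra.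
Qed.

Lemma block_increment :
  Rabs (g (setblock x i (fun k => b0 k + h * u k)) - g (setblock x i b0)
        - h * sumR (d i) (fun m => Dg i m (setblock x i b0) * u m))
    <= eps * (Rabs h * sumR (d i) (fun m => Rabs (u m))).
Proof. rewrite path_end. exact path_bound. Qed.

End BlockIncrement.

Definition seg (x : prof) (i : nat) (v w : vec) (t : R) : prof :=
  setblock x i (fun k => t * v k + (1 - t) * w k).

Lemma difference_quotient_bound a b L h c eps : h <> 0 -> c < eps ->
  Rabs (a - b - h * L) <= c * Rabs h -> Rabs ((a - b) / h - L) < eps.
Proof.
  intros Hh Hc Hab.
  assert (Hha : 0 < Rabs h) by (apply Rabs_pos_lt, Hh).
  replace ((a - b) / h - L) with ((a - b - h * L) * / h) by (field; exact Hh).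
  rewrite Rabs_mult, Rabs_inv.
  apply (Rmult_le_compat_r (/ Rabs h)) in Hab; [| left; apply Rinv_0_lt_compat, Hha].
  replace (c * Rabs h * / Rabs h) with c in Hab by (field; lra).
  lra.
Qed.

Lemma chain_rule_segment I d U g Dg x i v w t0 :
  (i < I)%nat -> open_set I d U -> C1_on I d U g Dg -> U (seg x i v w t0) ->
  derivable_pt_lim (fun t => g (seg x i v w t)) t0
    (sumR (d i) (fun m => Dg i m (seg x i v w t0) * (v m - w m))).
Proof.
  intros Hi HU HC HP.
  set (n := d i). set (u := fun m => v m - w m).
  set (b0 := fun k => t0 * v k + (1 - t0) * w k).
  set (P := seg x i v w t0).
  set (Um := sumR n (fun m => Rabs (u m))).
  assert (HUm : 0 <= Um) by (apply sumR_nonneg; intros; apply Rabs_pos).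
  destruct (HU P HP) as [e0 [He0 Hball]].
  intros eps Heps.
  set (eps' := eps / (Um + 1)).
  assert (Heps' : 0 < eps') by (unfold eps'; apply Rdiv_lt_0_compat; lra).
  assert (Hq : eps' * Um < eps).
  { unfold eps'. apply (Rmult_lt_reg_r (Um + 1)); [lra |].
    replace (eps / (Um + 1) * Um * (Um + 1)) with (eps * Um) by (field; lra). nra. }
  destruct (common_radius n (fun m del => forall y, U y -> pdist I d P y < del ->
              Rabs (Dg i m y - Dg i m P) < eps')) as [d1 [Hd1 Hosc]].
  { intros m del del' [Hd' Hle] Hm y Uy Hy. apply Hm; auto. lra. }
  { intros m Hm. destruct HC as [_ HC']. destruct (HC' i m Hi Hm) as [_ Hcont].
    destruct (Hcont P HP eps' Heps') as [del [Hdel Hd]]. exists del; split; auto. }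
  set (r := Rmin d1 e0).
  assert (Hr1 : r <= d1) by apply Rmin_l. assert (Hr2 : r <= e0) by apply Rmin_r.
  assert (Hr : 0 < r) by (apply Rmin_pos; auto).
  set (C := (INR n + 1) * (Um + 1)).
  assert (HC0 : 0 < C) by (unfold C; assert (0 <= INR n) by apply pos_INR; nra).
  assert (Hpos : 0 < r / C) by (apply Rdiv_lt_0_compat; auto).
  exists (mkposreal _ Hpos). intros h Hh0 Hhd. simpl in Hhd.
  assert (Hsmall : (INR n + 1) * (Rabs h * Um) < r).
  { apply (Rmult_lt_compat_r C) in Hhd; [| exact HC0].
    unfold Rdiv in Hhd. rewrite Rmult_assoc, Rinv_l in Hhd by lra.
    unfold C in Hhd. assert (0 <= INR n) by apply pos_INR. nra. }
  assert (Eseg : seg x i v w (t0 + h) = setblock x i (fun k => b0 k + h * u k)).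
  { unfold seg. f_equal. apply functional_extensionality; intro k. unfold b0, u. ring. }
  change (Rabs ((g (seg x i v w (t0 + h)) - g P) / h
                - sumR n (fun m => Dg i m P * u m)) < eps).
  rewrite Eseg. apply (difference_quotient_bound _ _ _ _ (eps' * Um)); [exact Hh0 | exact Hq |].
  rewrite Rmult_assoc, (Rmult_comm Um).
  apply (block_increment I d U g Dg x i b0 u h r eps' Hi HC).
  - intros Y HY. apply Hball. exact (Rlt_le_trans _ _ _ HY Hr2).
  - intros m Y Hm UY HY. apply Hosc; auto. exact (Rlt_le_trans _ _ _ HY Hr1).
  - exact Hsmall.
Qed.

Definition Dreg (D : nat -> nat -> nat -> prof -> R) (tau : R) (y : prof) :
  nat -> nat -> nat -> prof -> R :=
  fun p i k x => D p i k x + (if Nat.eqb i p then tau * (x p k - y p k) else 0).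

Definition D2reg (D2 : nat -> nat -> nat -> nat -> nat -> prof -> R) (tau : R) :
  nat -> nat -> nat -> nat -> nat -> prof -> R :=
  fun p i k j l x => D2 p i k j l x +
    (if andb (Nat.eqb i p) (andb (Nat.eqb j p) (Nat.eqb l k)) then tau else 0).

Lemma cont_everywhere_diff I d p k c : (p < I)%nat -> (k < d p)%nat ->
  cont_everywhere I d (fun x => x p k - c).
Proof.
  intros Hp Hk. apply (cont_everywhere_ext I d (fun x => x p k + (- c))); [intros; ring |].
  apply cont_everywhere_plus; [apply cont_everywhere_coord; auto | apply cont_everywhere_const].
Qed.

Lemma cont_everywhere_prox_grad I d p i k tau y : (i < I)%nat -> (k < d i)%nat ->
  cont_everywhere I d (fun x => if Nat.eqb i p then tau * (x p k - y p k) else 0).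
Proof.
  intros Hi Hk. destruct (Nat.eqb_spec i p) as [<- | _]; [| apply cont_everywhere_const].
  apply (cont_everywhere_mult I d (fun _ => tau) (fun x => x i k - y i k));
    [apply cont_everywhere_const | apply cont_everywhere_diff; auto].
Qed.

Lemma cont_everywhere_prox I d p tau y : (p < I)%nat ->
  cont_everywhere I d (fun x => tau / 2 * vnorm2 (d p) (fun k => x p k - y p k)).
Proof.
  intros Hp.
  apply (cont_everywhere_mult I d (fun _ => tau / 2)); [apply cont_everywhere_const |].
  apply (cont_everywhere_sum I d (d p) (fun k x => (x p k - y p k) ^ 2)).
  intros k Hk.
  apply (cont_everywhere_ext I d (fun x => (x p k - y p k) * (x p k - y p k)));
    [intros; ring |].
  apply cont_everywhere_mult; apply cont_everywhere_diff; auto.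
Qed.

Lemma reg_C1 I d U f D tau y p : (p < I)%nat -> C1_on I d U (f p) (D p) ->
  C1_on I d U (reg_game d f tau y p) (Dreg D tau y p).
Proof.
  intros Hp [Hc Hd]. split.
  - apply (cont_on_plus I d (f p)); auto. apply cont_everywhere_on, cont_everywhere_prox; auto.
  - intros i k Hi Hk. destruct (Hd i k Hi Hk) as [Hpar Hcd]. split.
    + intros x Ux. unfold has_partial, reg_game, Dreg.
      apply (dlim_plus (fun h => f p (upd x i k h))); [apply Hpar; auto |].
      eapply dlim_val; [| apply dlim_cmul;
        apply (dlim_sum (d p) (fun k0 h => (upd x i k h p k0 - y p k0) ^ 2)
          (fun k0 => if andb (Nat.eqb p i) (Nat.eqb k0 k) then 2 * (x p k0 - y p k0) else 0))].
      * destruct (Nat.eqb_spec i p) as [-> | Hip].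
        -- rewrite Nat.eqb_refl. simpl.
           rewrite (sumR_single _ _ k); [rewrite Nat.eqb_refl; field | | exact Hk].
           intros k0 _ Hk0. apply Nat.eqb_neq in Hk0. rewrite Hk0. reflexivity.
        -- replace (Nat.eqb p i) with false by (symmetry; apply Nat.eqb_neq; auto). simpl.
           rewrite sumR_zero; [ring | intros; reflexivity].
      * intros k0 Hk0. unfold upd. apply dlim_sq_if.
    + apply (cont_on_plus I d (D p i k)); auto.
      apply cont_everywhere_on, cont_everywhere_prox_grad; auto.
Qed.

Lemma reg_C1_partial I d U D D2 tau y p i k : (i < I)%nat -> (k < d i)%nat ->
  C1_on I d U (D p i k) (D2 p i k) ->
  C1_on I d U (Dreg D tau y p i k) (D2reg D2 tau p i k).
Proof.
  intros Hi Hk [Hc Hd].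
  assert (Hcont : cont_on I d (Dreg D tau y p i k) U).
  { apply (cont_on_plus I d (D p i k)); auto.
    apply cont_everywhere_on, cont_everywhere_prox_grad; auto. }
  split; [exact Hcont |].
  intros j l Hj Hl. destruct (Hd j l Hj Hl) as [Hpar Hcd]. split.
  - intros x Ux. unfold has_partial, Dreg, D2reg.
    apply (dlim_plus (fun h => D p i k (upd x j l h))); [apply Hpar; auto |].
    destruct (Nat.eqb i p); simpl; [| apply dlim_const].
    unfold upd. eapply dlim_val; [| apply dlim_lin_if].
    rewrite (Nat.eqb_sym p j), (Nat.eqb_sym k l). reflexivity.
  - apply (cont_on_plus I d (D2 p i k j l)); auto.
    apply cont_everywhere_on, cont_everywhere_const.
Qed.

Lemma reg_hess I d Q f U D D2 tau y : Hess_data I d Q f U D D2 ->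
  Hess_data I d Q (reg_game d f tau y) U (Dreg D tau y) (D2reg D2 tau).
Proof.
  intros [HU [HQ HC2]]. split; auto. split; auto. intros p Hp.
  destruct (HC2 p Hp) as [HC1 HC1']. split.
  - apply reg_C1; auto.
  - intros i k Hi Hk. apply reg_C1_partial; auto.
Qed.

Lemma reg_assumption2 I d Q f tau y :
  Assumption2 I d Q f -> Assumption2 I d Q (reg_game d f tau y).
Proof.
  intros [U [D [D2 [HH [M HM]]]]]. exists U, (Dreg D tau y), (D2reg D2 tau).
  split; [apply reg_hess; auto |]. exists (M + Rabs tau).
  intros x Hx p i k j l Hp Hi Hk Hj Hl.
  unfold D2reg. eapply Rle_trans; [apply Rabs_triang |].
  apply Rplus_le_compat; [apply HM; auto |].
  destruct (andb _ _); [lra | rewrite Rabs_R0; apply Rabs_pos].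
Qed.

(** ** Effect of the regularization on alpha and beta *)

Lemma eigenvalue_shift n S tau lam :
  is_eigenvalue n (sym_part (fun k l => S k l + (if Nat.eqb l k then tau else 0))) lam <->
  is_eigenvalue n (sym_part S) (lam - tau).
Proof.
  assert (Esym : sym_part (fun k l => S k l + (if Nat.eqb l k then tau else 0))
                 = fun k l => sym_part S k l + (if Nat.eqb l k then tau else 0)).
  { apply functional_extensionality; intro k; apply functional_extensionality; intro l.
    unfold sym_part. rewrite (Nat.eqb_sym k l). destruct (Nat.eqb l k); field. }
  assert (Emv : forall v k, (k < n)%nat ->
     mat_vec n (fun k l => sym_part S k l + (if Nat.eqb l k then tau else 0)) v k
     = mat_vec n (sym_part S) v k + tau * v k).
  { intros v k Hk. unfold mat_vec. rewrite <- (sumR_delta_mul n tau v k Hk), <- sumR_plus.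
    apply sumR_ext; intros; ring. }
  rewrite Esym. split; intros [v [Hv He]]; exists v; split; auto;
    intros k Hk; specialize (He k Hk); rewrite ?Emv in * by auto; lra.
Qed.

Lemma lambda_least_shift n S tau lam :
  lambda_least n (fun k l => S k l + (if Nat.eqb l k then tau else 0)) lam <->
  lambda_least n S (lam - tau).
Proof.
  unfold lambda_least. split; intros [He Hl]; split.
  - apply eigenvalue_shift; auto.
  - intros mu Hmu.
    assert (H : is_eigenvalue n
      (sym_part (fun k l => S k l + (if Nat.eqb l k then tau else 0))) (mu + tau)).
    { apply eigenvalue_shift. replace (mu + tau - tau) with mu by ring. auto. }
    specialize (Hl _ H). lra.
  - apply eigenvalue_shift; auto.
  - intros mu Hmu. apply eigenvalue_shift in Hmu. specialize (Hl _ Hmu). lra.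
Qed.

Lemma is_glb_shift E a tau : is_glb E a -> is_glb (fun r => E (r - tau)) (a + tau).
Proof.
  intros [H1 H2]. split.
  - intros s Hs. specialize (H1 _ Hs). lra.
  - intros b Hb. assert (b - tau <= a); [| lra]. apply H2. intros s Hs.
    assert (E (s + tau - tau)) by (replace (s + tau - tau) with s by ring; auto).
    specialize (Hb _ H). lra.
Qed.

Lemma is_glb_ext E F a : (forall r, E r <-> F r) -> is_glb E a -> is_glb F a.
Proof.
  intros H [H1 H2]. split.
  - intros s Hs. apply H1, H, Hs.
  - intros b Hb. apply H2. intros s Hs. apply Hb, H, Hs.
Qed.

Lemma is_lub_ext E F a : (forall r, E r <-> F r) -> is_lub E a -> is_lub F a.
Proof.
  intros H [H1 H2]. split.
  - intros s Hs. apply H1, H, Hs.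
  - intros b Hb. apply H2. intros s Hs. apply Hb, H, Hs.
Qed.

Lemma lub_nonempty E m : is_lub E m -> exists r, E r.
Proof.
  intros [H1 H2]. apply NNPP. intros Hn.
  assert (m <= m - 1); [| lra]. apply H2. intros r Hr. exfalso; apply Hn; exists r; auto.
Qed.

Lemma D2reg_diag D2 tau i x :
  (fun k l => D2reg D2 tau i i k i l x)
  = (fun k l => D2 i i k i l x + (if Nat.eqb l k then tau else 0)).
Proof.
  apply functional_extensionality; intro k; apply functional_extensionality; intro l.
  unfold D2reg. rewrite Nat.eqb_refl. reflexivity.
Qed.

Lemma D2reg_offdiag D2 tau i j x : i <> j ->
  (fun k l => D2reg D2 tau i i k j l x) = (fun k l => D2 i i k j l x).
Proof.
  intros Hij.
  apply functional_extensionality; intro k; apply functional_extensionality; intro l.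
  unfold D2reg. rewrite Nat.eqb_refl.
  replace (Nat.eqb j i) with false by (symmetry; apply Nat.eqb_neq; auto). simpl. ring.
Qed.

Lemma reg_alpha I d Q f tau y i a : alpha_min I d Q f i a ->
  alpha_min I d Q (reg_game d f tau y) i (a + tau).
Proof.
  intros [U [D [D2 [HH Hglb]]]]. exists U, (Dreg D tau y), (D2reg D2 tau).
  split; [apply reg_hess; auto |].
  apply (is_glb_ext (fun r => exists x, inQ I Q x /\
           lambda_least (d i) (fun k l => D2 i i k i l x) (r - tau))).
  - intros r. split; intros [x [Hx Hl]]; exists x; split; auto.
    + rewrite D2reg_diag. apply lambda_least_shift, Hl.
    + rewrite D2reg_diag in Hl. apply lambda_least_shift, Hl.
  - exact (is_glb_shift _ _ tau Hglb).
Qed.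

Lemma reg_beta I d Q f tau y i j b : i <> j -> beta_max I d Q f i j b ->
  beta_max I d Q (reg_game d f tau y) i j b.
Proof.
  intros Hij [U [D [D2 [HH Hlub]]]]. exists U, (Dreg D tau y), (D2reg D2 tau).
  split; [apply reg_hess; auto |].
  eapply is_lub_ext; [| exact Hlub]. intros r.
  split; intros [x [Hx Hn]]; exists x; split; auto.
  - rewrite D2reg_offdiag by exact Hij. exact Hn.
  - rewrite D2reg_offdiag in Hn by exact Hij. exact Hn.
Qed.

Lemma beta_nonneg I d Q f i j b : beta_max I d Q f i j b -> 0 <= b.
Proof.
  intros [U [D [D2 [_ Hlub]]]].
  destruct (lub_nonempty _ _ Hlub) as [r [x [Hx Hn]]].
  destruct (lub_nonempty _ _ Hn) as [s [v [Hv Es]]].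
  assert (0 <= s) by (rewrite Es; unfold vnorm; apply sqrt_pos).
  assert (s <= r) by (apply (proj1 Hn); exists v; auto).
  assert (r <= b) by (apply (proj1 Hlub); exists x; auto).
  lra.
Qed.

From HB Require structures.
From mathcomp Require all_boot all_order all_algebra.
From mathcomp Require Rstruct.
From mathcomp Require ring lra.

Module LinearAlgebra.
Import HB.structures.
Import mathcomp.boot.all_boot mathcomp.order.all_order mathcomp.algebra.all_algebra.
Import mathcomp.reals_stdlib.Rstruct.
Import mathcomp.algebra_tactics.ring mathcomp.algebra_tactics.lra.
Import Order.TTheory GRing.Theory Num.Theory.
Local Open Scope ring_scope.

Lemma sumR_big n (g : nat -> R) : sumR n g = \sum_(i < n) g i.
Proof. elim: n => [|n IH] /=; first by rewrite big_ord0. by rewrite big_ord_recr /= IH. Qed.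

Lemma pow_expr (x : R) n : pow x n = x ^+ n.
Proof. by elim: n => //= n ->; rewrite exprS. Qed.

Lemma ltb_ltn (c j : nat) : Nat.ltb c j = (c < j)%N.
Proof.
case: (Nat.ltb_spec0 c j) => [/ssrnat.ltP -> //| h].
by apply/esym/negbTE/negP => /ssrnat.ltP.
Qed.

Lemma Nateqb_eq (a b : nat) : Nat.eqb a b = (a == b).
Proof. by case: (Nat.eqb_spec a b) => [->|h]; [rewrite eqxx | apply/esym/eqP]. Qed.

Lemma det_big n (A : mat) : det n A = \det (\matrix_(i < n, j < n) A i j).
Proof.
elim: n A => [|n IH] A; first by rewrite det_mx00.
cbn [det].
rewrite (expand_det_row _ ord0) sumR_big; apply: eq_bigr => j _.
rewrite mxE /cofactor pow_expr IH add0n.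
have -> : (-1)%R = -1 :> R by [].
rewrite !RmultE -mulrA mulrCA; congr (_ * (_ * \det _)).
apply/matrixP => r c; rewrite !mxE /minor /= ltb_ltn /bump.
by case: ltnP => h; rewrite ?add0n ?add1n.
Qed.

Definition sddmx {n} (A : 'M[R]_n) :=
  forall i, (\sum_(j < n | j != i) `|A i j|) < A i i.

(** Levy-Desplanques: such a matrix is invertible (look at the largest
    entry of a kernel vector of A^T). *)
Lemma sdd_det_neq0 n (A : 'M[R]_n) : sddmx A -> \det A != 0.
Proof.
move=> sA; apply/negP => /eqP d0.
have /det0P [v v0 vA] : \det A^T == 0 by rewrite det_tr d0.
case: n A sA v v0 vA d0 => [|n] A sA v v0 vA d0.
  by move: v0; rewrite thinmx0 eqxx.
have [i _ imax] := @arg_maxP _ _ 'I_n.+1 ord0 xpredT (fun j => `|v 0 j|) isT.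
have vipos : 0 < `|v 0 i|.
  rewrite lt_neqAle normr_ge0 andbT eq_sym; apply/negP => /eqP vi0.
  move/negP: v0; apply; apply/eqP/rowP => j; rewrite mxE.
  by apply/eqP; rewrite -normr_le0 -vi0; exact: imax.
have := congr1 (fun M : 'M[R]_(1, n.+1) => M 0 i) vA; rewrite !mxE.
under eq_bigr do rewrite mxE.
rewrite (bigD1 i) //= => /eqP.
rewrite addrC addr_eq0 => /eqP e.
have : A i i * `|v 0 i| <= (\sum_(j < n.+1 | j != i) `|A i j|) * `|v 0 i|.
  have Aii : 0 <= A i i by apply: le_trans (ltW (sA i)); apply: sumr_ge0.
  rewrite -(ger0_norm Aii) -normrM (mulrC (A i i)) -normrN -e mulr_suml.
  apply: le_trans (ler_norm_sum _ _ _) _.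
  apply: ler_sum => j _; rewrite normrM mulrC.
  by apply: ler_wpM2l; [apply: normr_ge0 | apply: imax].
by apply/negP; rewrite -ltNge ltr_pM2r // sA.
Qed.

(** Shrinking the off-diagonal entries by t in [0,1] keeps the matrix
    dominant, hence the determinant never vanishes along the way from the
    diagonal matrix (t = 0) to A (t = 1); by the intermediate value theorem
    for the polynomial t |-> det it keeps the sign of the diagonal product. *)
Lemma sdd_det_pos n (A : 'M[R]_n) : sddmx A -> 0 < \det A.
Proof.
move=> sA.
pose At (t : R) := \matrix_(i < n, j < n) (if i == j then A i j else A i j * t).
have sAt : forall t, 0 <= t <= 1 -> sddmx (At t).
  move=> t /andP [t0 t1] i; rewrite mxE eqxx.
  apply: le_lt_trans (sA i).
  apply: ler_sum => j ji; rewrite mxE eq_sym (negbTE ji) normrM (ger0_norm t0).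
  by apply: ler_piMr => //.
pose P : {poly R} := \det (\matrix_(i < n, j < n)
   (if i == j then (A i j)%:P else (A i j)%:P * 'X)).
have HP : forall t, P.[t] = \det (At t).
  move=> t; rewrite -horner_evalE -det_map_mx; congr (\det _).
  apply/matrixP => i j; rewrite !mxE /=; case: (i == j).
    by rewrite horner_evalE hornerC.
  by rewrite horner_evalE hornerMX hornerC.
have P0 : 0 < P.[0].
  rewrite HP.
  have -> : At 0 = diag_mx (\row_i A i i).
    apply/matrixP => i j; rewrite !mxE; case: eqP => [->|_]; first by rewrite mulr1n.
    by rewrite mulr0 mulr0n.
  rewrite det_diag; apply: prodr_gt0 => i _; rewrite mxE.
  by apply: le_lt_trans (sA i); apply: sumr_ge0.
have P1 : P.[1] = \det A.
  rewrite HP; congr (\det _); apply/matrixP => i j; rewrite mxE.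
  by case: (i == j); rewrite ?mulr1.
rewrite -P1 ltNge; apply/negP => Ple.
have [x /andP [x0 x1] rx] : exists2 x, 0 <= x <= 1 & root (- P) x.
  apply: poly_ivt; first by rewrite ler01.
  by rewrite !hornerN oppr_le0 oppr_ge0 Ple (ltW P0).
move: rx; rewrite rootN => /rootP; rewrite HP => /eqP.
by apply/negP; apply: sdd_det_neq0; apply: sAt; rewrite x0 x1.
Qed.

Lemma sdd_det_pos_list n (A : mat) :
  (forall k, (k < n)%coq_nat ->
     Rlt (sumR n (fun l => if Nat.eqb l k then 0%R else Rabs (A k l))) (A k k)) ->
  Rlt 0 (det n A).
Proof.
move=> H; rewrite det_big; apply/RltP; apply: sdd_det_pos => i.
have /RltP := H i (ssrnat.ltP (ltn_ord i)).
congr (_ < _); last by rewrite mxE.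
rewrite sumR_big [in RHS]big_mkcond /=; apply: eq_bigr => j _.
rewrite Nateqb_eq -(inj_eq val_inj) /=.
by case: (nat_of_ord j == nat_of_ord i); rewrite ?mxE.
Qed.

Lemma nonneg_quadratic_discr (a b c : R) :
  0 <= c -> (forall t, 0 <= a + 2 * t * b + t ^+ 2 * c) -> b ^+ 2 <= a * c.
Proof.
move=> c0 H.
case: (ltrgtP c 0) => hc; first lra.
  have h := H (- b / c). have e : (- b / c) * c = - b by rewrite mulfVK // gt_eqF.
  nra.
rewrite hc mulr0; rewrite hc in H.
case: (eqVneq b 0) => [-> | b0]; first by rewrite expr0n.
have h := H (- (a + 1) / 2 / b).
have e : (- (a + 1) / 2 / b) * b = - (a + 1) / 2 by rewrite mulfVK.
nra.
Qed.

Section QuadraticForms.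
Variable n : nat.
Implicit Types (A T B : 'M[R]_n) (u w : 'cV[R]_n).

Definition nrm u : R := \sum_i u i 0 ^+ 2.
Definition form A u w : R := (u^T *m A *m w) 0 0.

Lemma formE A u w : form A u w = \sum_i \sum_j u i 0 * A i j * w j 0.
Proof.
rewrite /form mxE; under eq_bigr do rewrite mxE mulr_suml.
rewrite exchange_big /=; apply: eq_bigr => i _; apply: eq_bigr => j _.
by rewrite mxE.
Qed.

Lemma form1 u w : form 1%:M u w = \sum_i u i 0 * w i 0.
Proof. by rewrite /form mulmx1 mxE; apply: eq_bigr => i _; rewrite mxE. Qed.

Lemma nrm_form u : nrm u = form 1%:M u u.
Proof. by rewrite form1 /nrm; apply: eq_bigr => i _; rewrite expr2. Qed.

Lemma nrm_ge0 u : 0 <= nrm u.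
Proof. by apply: sumr_ge0 => i _; apply: sqr_ge0. Qed.

Lemma nrm_term u k : u k 0 ^+ 2 <= nrm u.
Proof.
rewrite /nrm (bigD1 k) //= lerDl; apply: sumr_ge0 => i _; apply: sqr_ge0.
Qed.

Lemma formDl A u u' w : form A (u + u') w = form A u w + form A u' w.
Proof.
rewrite !formE -big_split; apply: eq_bigr => i _; rewrite -big_split.
by apply: eq_bigr => j _; rewrite mxE !mulrDl.
Qed.

Lemma formDr A u w w' : form A u (w + w') = form A u w + form A u w'.
Proof.
rewrite !formE -big_split; apply: eq_bigr => i _; rewrite -big_split.
by apply: eq_bigr => j _; rewrite mxE !mulrDr.
Qed.

Lemma formZl A t u w : form A (t *: u) w = t * form A u w.
Proof.
rewrite !formE mulr_sumr; apply: eq_bigr => i _; rewrite mulr_sumr.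
by apply: eq_bigr => j _; rewrite mxE -!mulrA.
Qed.

Lemma formZr A t u w : form A u (t *: w) = t * form A u w.
Proof.
rewrite !formE mulr_sumr; apply: eq_bigr => i _; rewrite mulr_sumr.
by apply: eq_bigr => j _; rewrite mxE mulrCA.
Qed.

Lemma form_sym A u w : A^T = A -> form A u w = form A w u.
Proof.
move=> sA; rewrite /form.
have -> : (u^T *m A *m w) = (w^T *m A *m u)^T.
  by rewrite !trmx_mul trmxK sA mulmxA.
by rewrite mxE.
Qed.

Lemma form_CS A u w : A^T = A -> (forall v, 0 <= form A v v) ->
  form A u w ^+ 2 <= form A u u * form A w w.
Proof.
move=> sA psd; apply: nonneg_quadratic_discr => [|t]; first exact: psd.
have := psd (u + t *: w).
by rewrite formDl !formDr !formZl !formZr (form_sym A w u sA) => h; lra.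
Qed.

Definition Lmx A : R := \sum_i \sum_j `|A i j|.

Lemma Lmx_ge0 A : 0 <= Lmx A.
Proof. by apply: sumr_ge0 => i _; apply: sumr_ge0 => j _; apply: normr_ge0. Qed.

Lemma form_bound A u : `|form A u u| <= Lmx A * nrm u.
Proof.
rewrite formE /Lmx mulr_suml.
apply: le_trans (ler_norm_sum _ _ _) _; apply: ler_sum => i _.
rewrite mulr_suml.
apply: le_trans (ler_norm_sum _ _ _) _; apply: ler_sum => j _.
have hi := nrm_term u i; have hj := nrm_term u j.
have ha := normr_ge0 (u i 0); have hb := normr_ge0 (u j 0).
rewrite -(real_normK (num_real (u i 0))) in hi.
rewrite -(real_normK (num_real (u j 0))) in hj.
have hab : `|u i 0| * `|u j 0| <= nrm u by nra.
rewrite !normrM -mulrA [`|A i j| * _]mulrC mulrA [X in X <= _]mulrC.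
by apply: ler_wpM2l => //; apply: normr_ge0.
Qed.

Lemma nrm_mul B w : nrm (B *m w) <= (\sum_i \sum_j B i j ^+ 2) * nrm w.
Proof.
rewrite /nrm mulr_suml; apply: ler_sum => i _.
have e : (B *m w) i 0 = form 1%:M (row i B)^T w.
  by rewrite form1 mxE; apply: eq_bigr => j _; rewrite !mxE.
rewrite e.
have psd1 : forall v, 0 <= form 1%:M v v by move=> v; rewrite -nrm_form nrm_ge0.
apply: le_trans (form_CS _ _ _ (trmx1 _ _) psd1) _.
rewrite -!nrm_form.
have -> : nrm (row i B)^T = \sum_j B i j ^+ 2.
  by rewrite /nrm; apply: eq_bigr => j _; rewrite !mxE.
exact: lexx.
Qed.

Lemma rayleigh_glb A : (0 < n)%N ->
  exists mu, (forall u, mu * nrm u <= form A u u) /\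
             (forall c, 0 < c -> ~ (forall u, (mu + c) * nrm u <= form A u u)).
Proof.
move=> n0.
pose E := fun r : R => exists u, nrm u != 0 /\ r = - (form A u u / nrm u).
have bE : bound E.
  exists (Lmx A) => r [u [nu ->]]; apply/RleP.
  have np : 0 < nrm u by rewrite lt_neqAle eq_sym nu nrm_ge0.
  have := form_bound A u; rewrite ler_norml => /andP [h1 _].
  rewrite lerNl ler_pdivlMr //; lra.
have neE : exists r, E r.
  pose i0 := Ordinal n0.
  exists (- (form A (delta_mx i0 0) (delta_mx i0 0) / nrm (delta_mx i0 0))).
  exists (delta_mx i0 0); split => //.
  rewrite /nrm (bigD1 i0) //= big1 ?mxE ?eqxx ?addr0 ?expr1n ?oner_eq0 //.
  by move=> i ii0; rewrite mxE (negbTE ii0) /= expr0n.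
have [m [ubm lubm]] := completeness E bE neE.
exists (- m); split.
  move=> u; case: (eqVneq (nrm u) 0) => nu.
    rewrite nu mulr0.
    have := form_bound A u; rewrite nu mulr0 normr_le0 => /eqP ->; exact: lexx.
  have np : 0 < nrm u by rewrite lt_neqAle eq_sym nu nrm_ge0.
  have /RleP h := ubm _ (ex_intro _ u (conj nu erefl)).
  rewrite -ler_pdivlMr //; lra.
move=> c c0 hc.
have ub : is_upper_bound E (m - c).
  move=> r [u [nu ->]]; apply/RleP.
  have np : 0 < nrm u by rewrite lt_neqAle eq_sym nu nrm_ge0.
  have : - m + c <= form A u u / nrm u by rewrite ler_pdivlMr //; exact: hc.
  rewrite RminusE; lra.
have /RleP := lubm _ ub; rewrite RminusE; lra.
Qed.

Lemma psd_image_bound T u : T^T = T -> (forall v, 0 <= form T v v) ->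
  nrm (T *m u) <= Lmx T * form T u u.
Proof.
move=> sT psdT.
have cs := form_CS T u (T *m u) sT psdT.
have e1 : form T u (T *m u) = nrm (T *m u).
  by rewrite nrm_form /form mulmx1 trmx_mul sT.
have e2 := form_bound T (T *m u).
rewrite e1 in cs.
have p2 := psdT (T *m u); have pu := psdT u; have nn := nrm_ge0 (T *m u).
have LT0 := Lmx_ge0 T.
rewrite ger0_norm // in e2.
case: (eqVneq (nrm (T *m u)) 0) => z; first by rewrite z; apply: mulr_ge0.
have np : 0 < nrm (T *m u) by rewrite lt_neqAle eq_sym z nn.
have : nrm (T *m u) ^+ 2 <= (Lmx T * form T u u) * nrm (T *m u).
  apply: le_trans cs _; nra.
by rewrite expr2 ler_pM2r.
Qed.

Lemma psd_unit_coercive T : T^T = T -> (forall v, 0 <= form T v v) ->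
  T \in unitmx -> exists2 c, 0 < c & forall u, c * nrm u <= form T u u.
Proof.
move=> sT psdT uT.
pose K := \sum_i \sum_j (invmx T) i j ^+ 2.
have K0 : 0 <= K by apply: sumr_ge0 => i _; apply: sumr_ge0 => j _; apply: sqr_ge0.
have LT0 := Lmx_ge0 T.
have key : forall u, nrm u <= (K * Lmx T + 1) * form T u u.
  move=> u.
  have h1 : nrm u <= K * nrm (T *m u) by rewrite -{1}(mulKmx uT u); apply: nrm_mul.
  have h2 := psd_image_bound T u sT psdT.
  have pu := psdT u.
  have : K * nrm (T *m u) <= K * (Lmx T * form T u u) by apply: ler_wpM2l.
  nra.
exists (K * Lmx T + 1)^-1; first by rewrite invr_gt0; nra.
move=> u; rewrite -(ler_pM2l (_ : 0 < K * Lmx T + 1)); last by nra.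
by rewrite mulrA mulfV ?mul1r //; apply: lt0r_neq0; nra.
Qed.

(** The infimum of the Rayleigh quotients of a symmetric matrix is an
    eigenvalue: otherwise A - mu is invertible, hence coercive, and mu
    could be raised. *)
Lemma spectral_min A : (0 < n)%N -> A^T = A ->
  exists mu, (exists2 v : 'cV[R]_n, v != 0 & A *m v = mu *: v) /\
             forall u, mu * nrm u <= form A u u.
Proof.
move=> n0 sA; have [mu [low glb]] := rayleigh_glb A n0.
exists mu; split=> //.
pose T := A - mu%:M.
have sT : T^T = T by rewrite /T linearB /= sA tr_scalar_mx.
have formT : forall u, form T u u = form A u u - mu * nrm u.
  move=> u; rewrite /T nrm_form !formE mulr_sumr -sumrB; apply: eq_bigr => i _.
  rewrite mulr_sumr -sumrB; apply: eq_bigr => j _; rewrite !mxE.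
  by case: (i == j) => /=; ring.
have psdT : forall u, 0 <= form T u u by move=> u; rewrite formT subr_ge0.
case: (eqVneq (\det T) 0) => dT.
  have /det0P [v v0 vT] : \det T == 0 by rewrite dT.
  exists v^T.
    by apply: contra v0 => /eqP h; apply/eqP; rewrite -(trmxK v) h trmx0.
  have : T *m v^T = 0 by rewrite -sT -trmx_mul vT trmx0.
  by rewrite /T mulmxBl mul_scalar_mx => /eqP; rewrite subr_eq0 => /eqP.
have uT : T \in unitmx by rewrite unitmxE unitfE.
have [c c0 hc] := @psd_unit_coercive T sT psdT uT.
exfalso; apply: (glb c c0) => u.
by have := hc u; rewrite formT mulrDl; lra.
Qed.
End QuadraticForms.
Arguments nrm {n}.
Arguments form {n}.

Definition colv n (u : vec) : 'cV[R]_n := \col_(k < n) u k.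

Lemma nrm_colv n u : nrm (colv n u) = vnorm2 n u.
Proof.
rewrite /vnorm2 sumR_big /nrm; apply: eq_bigr => i _; by rewrite mxE pow_expr.
Qed.

Lemma Q_form n (G : mat) u :
  sumR n (fun m => Rmult (mat_vec n G u m) (u m)) =
  form (\matrix_(k < n, l < n) G k l) (colv n u) (colv n u).
Proof.
rewrite formE sumR_big; apply: eq_bigr => i _.
rewrite /mat_vec RmultE sumR_big mulr_suml; apply: eq_bigr => j _.
by rewrite !mxE !RmultE mulrC mulrA.
Qed.

Lemma half_sum n (X : 'I_n -> 'I_n -> R) k : (1 + 1) * k = 1 ->
  \sum_i \sum_j (X i j + X j i) * k = \sum_i \sum_j X i j.
Proof.
move=> hk; under eq_bigr do rewrite -mulr_suml.
rewrite -mulr_suml.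
under eq_bigr do rewrite big_split /=.
rewrite big_split /= [X in (_ + X) * _]exchange_big /=.
move: (\sum_i \sum_j X i j) => S.
by rewrite -{1 2}[S]mulr1 -mulrDr -mulrA hk mulr1.
Qed.

Lemma form_sym_part n (H : mat) (c : 'cV[R]_n) :
  form (\matrix_(k < n, l < n) sym_part H k l) c c =
  form (\matrix_(k < n, l < n) H k l) c c.
Proof.
rewrite !formE.
under [RHS]eq_bigr do under eq_bigr do rewrite mxE.
have half2 : (1 + 1) * Rinv 2 = 1 :> R by exact: (Rinv_r 2 (Rgt_not_eq 2 0 Rlt_0_2)).
rewrite -(@half_sum n (fun i j => c i 0 * H i j * c j 0) _ half2).
apply: eq_bigr => i _; apply: eq_bigr => j _.
by rewrite mxE /sym_part /Rdiv !RmultE !RplusE; ring.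
Qed.

Definition symmx n (H : mat) : 'M[R]_n := \matrix_(k < n, l < n) sym_part H k l.

Lemma symmx_sym n H : (symmx n H)^T = symmx n H.
Proof. by apply/matrixP => k l; rewrite !mxE /sym_part Rplus_comm. Qed.

Lemma is_eigenvalue_mx {n} {H : mat} {mu} {v : 'cV[R]_n.+1} :
  v != 0 -> symmx n.+1 H *m v = mu *: v -> is_eigenvalue n.+1 (sym_part H) mu.
Proof.
move=> v0 Av; exists (fun k => v (inord k) 0); split.
  case: (pickP (fun i => v i 0 != 0)) => [i vi|none].
    exists i; split; first by apply/ssrnat.ltP.
    by rewrite inord_val; apply/eqP.
  exfalso; move/negP: v0; apply; apply/eqP/colP => i; rewrite mxE.
  by move/negbFE/eqP: (none i).
move=> k /ssrnat.ltP kn; rewrite RmultE.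
have := congr1 (fun M : 'M[R]_(n.+1, 1) => M (inord k) 0) Av; rewrite !mxE => <-.
rewrite /mat_vec sumR_big; apply: eq_bigr => j _.
by rewrite !mxE inordK // inord_val.
Qed.

Lemma rayleigh_le_eigenvalue {n} {H : mat} {mu nu} :
  (forall c, mu * nrm c <= form (symmx n.+1 H) c c) ->
  is_eigenvalue n.+1 (sym_part H) nu -> mu <= nu.
Proof.
move=> low [w [[k0 [hk0 wk0]] ew]].
have np : 0 < nrm (colv n.+1 w).
  rewrite lt_neqAle nrm_ge0 andbT eq_sym; apply/eqP => z.
  have := @nrm_term n.+1 (colv n.+1 w) (inord k0).
  rewrite z mxE inordK; last by apply/ssrnat.ltP.
  move=> h; apply: wk0; apply/eqP; rewrite -sqrf_eq0 eq_le h sqr_ge0 //.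
have e : form (symmx n.+1 H) (colv n.+1 w) (colv n.+1 w) = nu * nrm (colv n.+1 w).
  rewrite -Q_form nrm_colv /vnorm2 !sumR_big mulr_sumr; apply: eq_bigr => m _.
  by rewrite ew; [rewrite pow_expr expr2 RmultE mulrA | apply/ssrnat.ltP].
by have := low (colv n.+1 w); rewrite e ler_pM2r.
Qed.

Lemma rayleigh_least_eigenvalue n (H : mat) : (0 < n)%coq_nat ->
  exists mu, lambda_least n H mu /\
    forall u : vec, Rle (Rmult mu (vnorm2 n u))
                        (sumR n (fun m => Rmult (mat_vec n H u m) (u m))).
Proof.
case: n H => [|n] H n0; first by case: (Nat.lt_irrefl 0 n0).
have [mu [[v v0 Av] low]] := @spectral_min n.+1 (symmx n.+1 H) (ltn0Sn n) (symmx_sym _ H).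
exists mu; split.
  split; first exact: (is_eigenvalue_mx v0 Av).
  by move=> nu /(rayleigh_le_eigenvalue low) /RleP.
by move=> u; rewrite Q_form -form_sym_part -nrm_colv; apply/RleP; exact: low.
Qed.

End LinearAlgebra.

(** ** Convexity of the regularized costs (Assumption 1) *)

Lemma seg_inQ I Q x i v w t : (forall j, (j < I)%nat -> convex_vset (Q j)) ->
  inQ I Q x -> Q i v -> Q i w -> 0 <= t <= 1 -> inQ I Q (seg x i v w t).
Proof.
  intros Hc Hx Hv Hw Ht j Hj. unfold seg, setblock.
  destruct (Nat.eqb_spec j i) as [-> | Hji]; [apply Hc; auto | apply Hx; auto].
Qed.

Lemma glb_rayleigh_bound n (A : prof -> mat) (E : prof -> Prop) a z u :
  is_glb (fun lam => exists x, E x /\ lambda_least n (A x) lam) a -> E z ->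
  a * vnorm2 n u <= sumR n (fun m => mat_vec n (A z) u m * u m).
Proof.
  intros Hglb Hz.
  destruct n as [| n'].
  - unfold vnorm2; simpl; lra.
  - destruct (LinearAlgebra.rayleigh_least_eigenvalue (S n') (A z) ltac:(lia))
      as [mu [Hmu Hq]].
    assert (Ham : a <= mu) by (apply (proj1 Hglb); exists z; auto).
    assert (Hvn := vnorm2_nonneg (S n') u).
    specialize (Hq u). nra.
Qed.

Lemma reg_hessian_quadratic D2 tau i n z u :
  sumR n (fun m => sumR n (fun l => D2reg D2 tau i i m i l z * u l) * u m)
  = sumR n (fun m => mat_vec n (fun k l => D2 i i k i l z) u m * u m) + tau * vnorm2 n u.
Proof.
  unfold vnorm2. rewrite <- sumR_scal, <- sumR_plus. apply sumR_ext. intros m Hm.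
  assert (Ei : sumR n (fun l => D2reg D2 tau i i m i l z * u l)
               = mat_vec n (fun k l => D2 i i k i l z) u m + tau * u m).
  { unfold D2reg. rewrite Nat.eqb_refl. simpl.
    rewrite <- (sumR_delta_mul n tau u m Hm). unfold mat_vec. rewrite <- sumR_plus.
    apply sumR_ext. intros l Hl. ring. }
  rewrite Ei. ring.
Qed.

Lemma reg_convex I d Q f tau y i a :
  (i < I)%nat -> (forall j, (j < I)%nat -> convex_vset (Q j)) ->
  alpha_min I d Q f i a -> 0 <= a + tau ->
  forall x, inQ I Q x -> forall v w t, Q i v -> Q i w -> 0 <= t <= 1 ->
  reg_game d f tau y i (setblock x i (fun k => t * v k + (1 - t) * w k))
    <= t * reg_game d f tau y i (setblock x i v)
       + (1 - t) * reg_game d f tau y i (setblock x i w).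
Proof.
  intros Hi Hconv [U [D [D2 [HH Hglb]]]] Hat x Hx v w t Hv Hw Ht.
  destruct (reg_hess I d Q f U D D2 tau y HH) as [HU [HQU HC2]].
  destruct (HC2 i Hi) as [HC1 HC1'].
  set (n := d i). set (u := fun m => v m - w m).
  set (g := reg_game d f tau y i).
  assert (Hseg : forall s, 0 <= s <= 1 -> U (seg x i v w s))
    by (intros s Hs; apply HQU, seg_inQ; auto).
  assert (E1 : setblock x i v = seg x i v w 1).
  { unfold seg. f_equal. apply functional_extensionality; intro k. ring. }
  assert (E0 : setblock x i w = seg x i v w 0).
  { unfold seg. f_equal. apply functional_extensionality; intro k. ring. }
  rewrite E1, E0.
  apply (convex_from_second (fun s => g (seg x i v w s))
    (fun s => sumR n (fun m => Dreg D tau y i i m (seg x i v w s) * u m))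
    (fun s => sumR n (fun m =>
       sumR n (fun l => D2reg D2 tau i i m i l (seg x i v w s) * u l) * u m)));
    [| | | exact Ht].
  - intros s Hs. apply (chain_rule_segment I d U); auto.
  - intros s Hs.
    apply (dlim_sum n (fun m s => Dreg D tau y i i m (seg x i v w s) * u m)).
    intros m Hm. apply (dlim_mulc (fun s => Dreg D tau y i i m (seg x i v w s))).
    apply (chain_rule_segment I d U); auto.
  - intros s Hs. rewrite reg_hessian_quadratic.
    assert (Hq := glb_rayleigh_bound n (fun x k l => D2 i i k i l x) (inQ I Q) a
                    (seg x i v w s) u Hglb ltac:(apply seg_inQ; auto)).
    assert (Hvn := vnorm2_nonneg n u).
    cbv beta in Hq. nra.
Qed.

Lemma reg_assumption1 I d Q f tau y (alpha : nat -> R) :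
  Assumption1 I d Q f ->
  (forall i, (i < I)%nat -> alpha_min I d Q f i (alpha i)) ->
  (forall i, (i < I)%nat -> 0 <= alpha i + tau) ->
  Assumption1 I d Q (reg_game d f tau y).
Proof.
  intros [HQ [[U [D [HUo [HQU HC1]]]] _]] Halpha Hat.
  split; [exact HQ |]. split.
  - exists U, (Dreg D tau y). split; auto. split; auto. intros p Hp. apply reg_C1; auto.
  - intros i Hi x Hx v w t Hv Hw Ht.
    apply (reg_convex I d Q f tau y i (alpha i)); auto.
    intros j Hj. apply HQ; auto.
Qed.

(** ** Upsilon of the regularized game is a P-matrix *)

Lemma reg_upsilon I d Q f tau y (alpha : nat -> R) (beta : nat -> nat -> R) :
  (forall i, (i < I)%nat -> alpha_min I d Q f i (alpha i)) ->
  (forall i j, (i < I)%nat -> (j < I)%nat -> i <> j -> beta_max I d Q f i j (beta i j)) ->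
  is_Upsilon I d Q (reg_game d f tau y)
    (fun i j => if Nat.eqb i j then alpha i + tau else - beta i j).
Proof.
  intros Halpha Hbeta. split.
  - intros i Hi. rewrite Nat.eqb_refl. apply reg_alpha; auto.
  - intros i j Hi Hj Hij.
    replace (Nat.eqb i j) with false by (symmetry; apply Nat.eqb_neq; auto).
    rewrite Ropp_involutive. apply reg_beta; auto.
Qed.

(** A matrix whose rows are strictly diagonally dominant, with positive
    diagonal, is a P-matrix: its principal submatrices inherit the property. *)
Lemma sdd_P_matrix I (M : mat) :
  (forall i, (i < I)%nat ->
     sumR I (fun j => if Nat.eqb j i then 0 else Rabs (M i j)) < M i i) ->
  P_matrix I M.
Proof.
  intros Hdom s _ Hs Hin. apply LinearAlgebra.sdd_det_pos_list. intros r Hr.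
  assert (Hinj : forall c, (c < length s)%nat -> c <> r -> nth c s O <> nth r s O).
  { intros c Hc Hcr. destruct (Nat.lt_total c r) as [Hlt | [Heq | Hgt]].
    - specialize (Hs c r Hlt Hr). lia.
    - lia.
    - specialize (Hs r c Hgt Hc). lia. }
  assert (HsI : forall c, (c < length s)%nat -> (nth c s O < I)%nat)
    by (intros c Hc; apply Hin, nth_In, Hc).
  set (p := nth r s O).
  set (F := fun j => if Nat.eqb j p then 0 else Rabs (M p j)).
  apply Rle_lt_trans with (sumR I F); [| apply Hdom, HsI, Hr].
  eapply Rle_trans; [| apply (sumR_sublist_le s I F); auto].
  - right. apply sumR_ext. intros c Hc. unfold F.
    destruct (Nat.eqb_spec c r) as [-> | Hcr].
    + fold p. rewrite Nat.eqb_refl. reflexivity.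
    + replace (Nat.eqb (nth c s O) p) with false
        by (symmetry; apply Nat.eqb_neq, Hinj; auto). reflexivity.
  - intros j Hj. unfold F. destruct (Nat.eqb j p); [lra | apply Rabs_pos].
Qed.

Lemma upsilon_dominant I (alpha : nat -> R) (beta : nat -> nat -> R) tau :
  (forall i j, (i < I)%nat -> (j < I)%nat -> i <> j -> 0 <= beta i j) ->
  (forall i, (i < I)%nat ->
     sumR I (fun j => if Nat.eqb j i then 0 else beta i j) < alpha i + tau) ->
  forall i, (i < I)%nat ->
    sumR I (fun j => if Nat.eqb j i then 0
                     else Rabs (if Nat.eqb i j then alpha i + tau else - beta i j))
    < (if Nat.eqb i i then alpha i + tau else - beta i i).
Proof.
  intros Hb0 Hdom i Hi. rewrite Nat.eqb_refl.
  eapply Rle_lt_trans; [right | apply Hdom, Hi]. apply sumR_ext. intros j Hj.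
  destruct (Nat.eqb_spec j i) as [-> | Hji]; [reflexivity |].
  replace (Nat.eqb i j) with false by (symmetry; apply Nat.eqb_neq; auto).
  rewrite Rabs_Ropp. apply Rabs_right, Rle_ge, Hb0; auto.
Qed.

Theorem mainTheorem5 (I : nat) (d : nat -> nat) (Q : nat -> vec -> Prop)
    (f : nat -> prof -> R) (alpha : nat -> R) (beta : nat -> nat -> R)
    (taubar : R) :
  Assumption1 I d Q f ->
  Assumption2 I d Q f ->
  (forall i, (i < I)%nat -> alpha_min I d Q f i (alpha i)) ->
  (forall i j, (i < I)%nat -> (j < I)%nat -> i <> j ->
     beta_max I d Q f i j (beta i j)) ->
  (* taubar = max_{i<I} ( sum_{j<>i} beta_ij - alpha_i ) *)
  (forall i, (i < I)%nat ->
     sumR I (fun j => if Nat.eqb j i then 0 else beta i j) - alpha i <= taubar) ->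
  (exists i, (i < I)%nat /\
     sumR I (fun j => if Nat.eqb j i then 0 else beta i j) - alpha i = taubar) ->
  forall (y : prof) (tau : R), taubar < tau ->
    PUpsilon_NEP I d Q (reg_game d f tau y).
Proof.
  intros HA1 HA2 Halpha Hbeta Hmax _ y tau Htau.
  assert (Hb0 : forall i j, (i < I)%nat -> (j < I)%nat -> i <> j -> 0 <= beta i j)
    by (intros i j Hi Hj Hij; apply (beta_nonneg I d Q f i j); auto).
  assert (Hdom : forall i, (i < I)%nat ->
     sumR I (fun j => if Nat.eqb j i then 0 else beta i j) < alpha i + tau)
    by (intros i Hi; specialize (Hmax i Hi); lra).
  (* alpha_i + tau exceeds a sum of nonnegative betas *)
  assert (Hat : forall i, (i < I)%nat -> 0 <= alpha i + tau).
  { intros i Hi. apply Rlt_le, Rle_lt_trans with (2 := Hdom i Hi), sumR_nonneg.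
    intros j Hj. destruct (Nat.eqb_spec j i); [lra | apply Hb0; auto]. }
  split; [| split].
  - apply (reg_assumption1 I d Q f tau y alpha); auto.
  - apply reg_assumption2, HA2.
  - exists (fun i j => if Nat.eqb i j then alpha i + tau else - beta i j). split.
    + apply reg_upsilon; auto.
    + apply sdd_P_matrix, upsilon_dominant; auto.
Qed.
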